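(* Let $N\ge 2$ be an integer and consider the graph $G_N$ and the clustering coefficient $C(p)$ defined below. Let $p_j$ denote the $j$-th prime and $\pi(x)$ the number of primes $\le x$. Let $p\le N$ be a prime having at least one neighbour in $G_N$ other than itself. If $p\ge\sqrt N$, then $C(p)=1$. If $p\le \sqrt N$, then $$C(p)=\frac{\left[\pi(p)-1\right]\left[2\left(\pi\left(\frac{N}{p}\right)-1\right)-\pi(p)\right]+2\left[\sum_{j=\pi(p)+1}^{\pi(\sqrt N)}\left(\pi\left(\frac{N}{p_j}\right)-j\right)+\pi(\sqrt N)-1\right]}{\pi\left(\frac{N}{p}\right)\left[\pi\left(\frac{N}{p}\right)-1\right]}.$$
   Context: The graph $G_N$ has vertex set the primes $q\le N$; two distinct primes $q,q'\le N$ are adjacent iff $qq'\le N$ (i.e. some composite $\le N$ is divisible by both), and a prime $q$ carries a self-loop iff $q^2\le N$. For a prime $p\le N$, let $V(p)$ be the set of primes $q\ne p$ adjacent to $p$ and $k=|V(p)|\ge 1$. Let $L(p)$ be the number of unordered pairs of distinct elements of $V(p)$ that are adjacent, plus the number of elements of $V(p)$ carrying a self-loop. The clustering coefficient is $C(p)=L(p)\big/\tfrac{1}{2}k(k+1)$ (the maximum possible number of such links, self-loops allowed). *)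

From mathcomp Require Import all_boot all_order all_algebra.
Set Implicit Arguments. Unset Strict Implicit. Unset Printing Implicit Defensive.
Import Order.TTheory GRing.Theory Num.Theory.

Definition vertices (N : nat) : seq nat := [seq q <- iota 0 N.+1 | prime q].

Definition adjacent (N q q' : nat) : bool := (q != q') && (q * q' <= N).

Definition selfloop (N q : nat) : bool := q * q <= N.

Definition nbhd (N p : nat) : seq nat :=
  [seq q <- vertices N | (q != p) && adjacent N p q].

(* L(p): unordered pairs {q, q'} (q < q') of distinct elements of V(p) that
   are adjacent, plus the number of elements of V(p) carrying a self-loop. *)
Definition links (N p : nat) : nat :=
  \sum_(q <- nbhd N p) \sum_(q' <- nbhd N p) ((q < q') && adjacent N q q')
  + count (selfloop N) (nbhd N p).

Definition clustering (N p : nat) : rat :=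
  let k := size (nbhd N p) in
  ((links N p)%:R / ((k * k.+1)%:R / 2%:R))%R.

(* pi(n): number of primes <= n (for natural n; pi(x) = pi(floor x)). *)
Definition primepi (n : nat) : nat := count prime (iota 0 n.+1).

Definition isqrt (N : nat) : nat := \max_(r < N.+1 | r * r <= N) r.

Definition next_prime (m : nat) : nat :=
  ex_minn (let: exist2 p Hp Hq := prime_above m in
           ex_intro (fun q => (m < q) && prime q) p (introT andP (conj Hp Hq))).

(* nth_prime j = p_j, the j-th prime (1-indexed: p_1 = 2); nth_prime 0 = 0 is
   a dummy value, never used. *)
Fixpoint nth_prime (j : nat) : nat :=
  match j with
  | 0 => 0
  | j'.+1 => next_prime (nth_prime j')
  end.

(* The neighbours of p are the primes q <> p with q <= N/p.  If N <= p^2 they all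
   lie below p, so any two of them (and each with itself) multiply to less than
   p q <= N: the neighbourhood is complete, loops included, and C(p) = 1.
   If p^2 <= N, there are pi(N/p) - 1 neighbours, pi(sqrt N) - 1 of them with a
   loop, and the links are counted from their smaller end q: a neighbour q < p
   is linked to every larger neighbour, pi(N/p) - 1 - pi(q) of them, while for
   q > p the larger partners are the primes in (q, N/q], which exist only for
   q <= sqrt N.  Writing q = p_j, so that pi(q) = j, turns these counts into the
   sums of the formula; the first one is arithmetic. *)

From mathcomp Require Import all_boot all_order all_algebra.
From mathcomp Require Import zify ring.
Import Order.TTheory GRing.Theory Num.Theory.

Lemma primepiS n : primepi n.+1 = primepi n + prime n.+1.
Proof. by rewrite /primepi -addn1 iotaD count_cat /= addn0. Qed.

Lemma leq_primepi {m n} : m <= n -> primepi m <= primepi n.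
Proof. by rewrite /primepi => /subnKC <-; rewrite -addSn iotaD count_cat leq_addr. Qed.

Lemma ltn_primepi {m n} : m < n -> prime n -> primepi m < primepi n.
Proof.
by case: n => // n lt_mn pr_n; rewrite primepiS pr_n addn1 ltnS leq_primepi.
Qed.

Lemma primepi_inj {m n} : prime m -> prime n -> primepi m = primepi n -> m = n.
Proof.
move=> pr_m pr_n eq_mn; case: (ltngtP m n) => // lt_mn.
  by have := ltn_primepi lt_mn pr_n; rewrite eq_mn ltnn.
by have := ltn_primepi lt_mn pr_m; rewrite eq_mn ltnn.
Qed.

Lemma primepi_gap {m q} : m < q -> prime q ->
  (forall r, m < r < q -> ~~ prime r) -> primepi q = (primepi m).+1.
Proof.
move=> lt_mq pr_q no_prime; rewrite /primepi.
have -> : iota 0 q.+1 = iota 0 m.+1 ++ iota m.+1 (q - m.+1) ++ [:: q].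
  by rewrite -[q.+1]addn1 -{1}(subnKC lt_mq) !iotaD add0n subnKC // catA.
have no_mid : count prime (iota m.+1 (q - m.+1)) = 0.
  apply/eqP; rewrite -leqn0 leqNgt -has_count; apply/hasP => [[r]].
  by rewrite mem_iota subnKC // => /no_prime/negbTE ->.
by rewrite !count_cat no_mid /= pr_q addn0 addn1.
Qed.

Lemma next_primeP m : [/\ m < next_prime m, prime (next_prime m) &
  forall r, m < r -> prime r -> next_prime m <= r].
Proof.
rewrite /next_prime; case: ex_minnP => q /andP[lt_mq pr_q] min_q; split=> // r lt_mr pr_r.
by apply: min_q; rewrite lt_mr pr_r.
Qed.

Lemma primepi_nth_prime j : primepi (nth_prime j) = j.
Proof.
elim: j => // j IHj /=; have [lt_pq pr_q min_q] := next_primeP (nth_prime j).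
rewrite (primepi_gap lt_pq pr_q) ?IHj // => r /andP[lt_pr lt_rq]; apply/negP => pr_r.
by have := min_q r lt_pr pr_r; rewrite leqNgt lt_rq.
Qed.

Lemma prime_nth_prime {j} : 0 < j -> prime (nth_prime j).
Proof. by case: j => // j _; case: (next_primeP (nth_prime j)). Qed.

Lemma nth_prime_primepi n : prime n -> nth_prime (primepi n) = n.
Proof.
move=> pr_n; apply: primepi_inj => //; last by rewrite primepi_nth_prime.
by apply: prime_nth_prime; exact: ltn_primepi (prime_gt0 pr_n) pr_n.
Qed.

Lemma ltn_nth_prime a j : (a < nth_prime j) = (primepi a < j).
Proof.
case: j => [|j]; first by rewrite ltn0.
apply/idP/idP => [lt_a|].
  by have := ltn_primepi lt_a (prime_nth_prime (ltn0Sn j)); rewrite primepi_nth_prime.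
by apply: contraTT; rewrite -!leqNgt => /leq_primepi; rewrite primepi_nth_prime.
Qed.

Lemma filter_prime_iota n :
  [seq q <- iota 0 n.+1 | prime q] = map nth_prime (iota 1 (primepi n)).
Proof.
elim: n => [|n IHn] //; rewrite -addn1 iotaD filter_cat IHn primepiS /=.
case: (boolP (prime n.+1)) => [pr_n|_]; last by rewrite !addn0 cats0.
have next : (primepi n).+1 = primepi n.+1 by rewrite primepiS pr_n addn1.
by rewrite iotaD map_cat add1n next /= nth_prime_primepi.
Qed.

Section PrimeSums.

Context {R : Type} {idx : R} (op : Monoid.law idx).

Lemma big_primes_between {a b M} (F : nat -> R) : b <= M ->
  \big[op/idx]_(q <- iota 0 M.+1 | prime q && (a < q <= b)) F (primepi q) =
  \big[op/idx]_((primepi a).+1 <= j < (primepi b).+1) F j.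
Proof.
move=> le_bM; rewrite -big_filter_cond filter_prime_iota big_map.
have le_piM : (primepi b).+1 <= (primepi M).+1 by rewrite ltnS leq_primepi.
rewrite (big_nat_widen _ _ _ _ _ le_piM) (big_nat_widenl _ 1) //.
rewrite /index_iota !subSS subn0; apply: eq_big => j; last by rewrite primepi_nth_prime.
by rewrite (ltn_nth_prime a) [nth_prime j <= b]leqNgt (ltn_nth_prime b) -leqNgt ltnS andbC.
Qed.

End PrimeSums.

Lemma count_primes_between {a b M} : a <= b -> b <= M ->
  count (fun q => prime q && (a < q <= b)) (iota 0 M.+1) + primepi a = primepi b.
Proof.
move=> le_ab le_bM; rewrite -sum1_count (big_primes_between _ (fun=> 1)) // sum_nat_const_nat.
by rewrite muln1 subSS subnK // leq_primepi.
Qed.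

Lemma count_primes_between_except {p a b M} : prime p -> a < p <= b -> b <= M ->
  (count (fun q => prime q && (q != p) && (a < q <= b)) (iota 0 M.+1)).+1
  + primepi a = primepi b.
Proof.
move=> pr_p /andP[lt_ap le_pb] le_bM.
set P := fun q => prime q && (a < q <= b); set s := [seq q <- iota 0 M.+1 | P q].
have p_in : p \in s.
  by rewrite mem_filter /P pr_p lt_ap le_pb mem_iota /= ltnS (leq_trans le_pb le_bM).
have -> : count (fun q => prime q && (q != p) && (a < q <= b)) (iota 0 M.+1) = (size s).-1.
  rewrite -(size_rem p_in) rem_filter ?filter_uniq ?iota_uniq // -filter_predI size_filter.
  by apply: eq_count => q /=; rewrite /P andbAC andbC.
rewrite prednK; last by rewrite -has_predT; apply/hasP; exists p.
by rewrite size_filter count_primes_between // ltnW // (leq_trans lt_ap le_pb).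
Qed.

Lemma leq_isqrt N x : (x <= isqrt N) = (x * x <= N).
Proof.
have isqrt_max y : y * y <= N -> y <= isqrt N.
  move=> le_yN; have lt_yN : y < N.+1 by nia.
  exact: (leq_bigmax_cond (F := fun r : 'I_N.+1 => nat_of_ord r) (Ordinal lt_yN)).
have isqrt_sq : isqrt N * isqrt N <= N.
  rewrite leqNgt; apply/negP => lt_N.
  suff : isqrt N <= (isqrt N).-1 by nia.
  by apply/bigmax_leqP => i le_iN; nia.
apply/idP/idP => [le_x|]; last exact: isqrt_max.
exact: leq_trans (leq_mul le_x le_x) isqrt_sq.
Qed.

Lemma isqrt_leq N : isqrt N <= N.
Proof. by have := leq_isqrt N (isqrt N); rewrite leqnn => /esym; nia. Qed.

Lemma sum_nat_of_bool (T : Type) (s : seq T) (P : pred T) :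
  \sum_(x <- s) (P x : nat) = count P s.
Proof. by rewrite -sum1_count [RHS]big_mkcond; apply: eq_bigr => x _; case: (P x). Qed.

Lemma mul2n_bin2S n : 2 * 'C(n.+1, 2) = n.+1 * n.
Proof. by rewrite -mul_bin_diag bin1. Qed.

Lemma sum_count_ltn_uniq (s : seq nat) :
  uniq s -> \sum_(x <- s) count (fun y => x < y) s = 'C(size s, 2).
Proof.
elim: s => [|x s IHs] /=; first by rewrite big_nil.
move=> /andP[x_notin uniq_s]; rewrite big_cons /= ltnn big_split /= IHs //.
rewrite sum_nat_of_bool addnA binS bin1 addnC add0n; congr (_ + _).
rewrite -(count_predC (fun y => x < y) s); congr (_ + _).
apply: eq_in_count => y y_in /=; have ne_yx : y != x by apply: contraNneq x_notin => <-.
by rewrite -leqNgt ltn_neqAle ne_yx.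
Qed.

Lemma double_sum_sub_index (R : comPzRingType) (x : R) n :
  (2 * \sum_(1 <= j < n.+1) (x - j%:R) = n%:R * (2 * x - n%:R - 1))%R.
Proof.
elim: n => [|n IHn]; first by rewrite big_geq // mulr0 mul0r.
by rewrite big_nat_recr //= mulrDr IHn -addn1 natrD; ring.
Qed.

Section Clustering.

Variables N p : nat.
Hypothesis pr_p : prime p.

Let p_gt0 : 0 < p := prime_gt0 pr_p.

Lemma nbhdE :
  nbhd N p = [seq q <- iota 0 N.+1 | prime q && (q != p) && (p * q <= N)].
Proof.
rewrite /nbhd /vertices -filter_predI; apply: eq_filter => q /=.
by rewrite /adjacent eq_sym andbA andbb andbC andbA.
Qed.

Definition later_nbrs q := count (fun q' => (q < q') && adjacent N q q') (nbhd N p).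

Lemma linksE :
  links N p = \sum_(q <- nbhd N p) later_nbrs q + count (selfloop N) (nbhd N p).
Proof. by congr (_ + _); apply: eq_bigr => q _; rewrite sum_nat_of_bool. Qed.

Lemma clustering_binomial :
  clustering N p = ((links N p)%:R / ('C((size (nbhd N p)).+1, 2))%:R)%R.
Proof.
by rewrite /clustering mulnC -mul2n_bin2S natrM [X in (_ / X)%R]mulrC mulKf.
Qed.

Lemma mem_nbhd q :
  (q \in nbhd N p) = [&& prime q, q != p & p * q <= N].
Proof. by rewrite nbhdE mem_filter mem_iota andbA andbC /=; case: leqP => //; nia. Qed.

Lemma clustering_complete :
  N <= p * p -> 0 < size (nbhd N p) -> clustering N p = 1%R.
Proof.
move=> le_Np k_gt0; set V := nbhd N p.
have lt_p q : q \in V -> q < p /\ p * q <= N.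
  by rewrite mem_nbhd => /and3P[_ ne_qp le_pqN]; split=> //; move: ne_qp; nia.
have later_all q : q \in V -> later_nbrs q = count (fun q' => q < q') V.
  move=> V_q; apply: eq_in_count => q' V_q' /=; rewrite /adjacent.
  have [lt_qp _] := lt_p q V_q; have [_ le_pq'N] := lt_p q' V_q'.
  by case: ltngtP => //= _; nia.
have loops_all : count (selfloop N) V = size V.
  rewrite -count_predT; apply: eq_in_count => q /lt_p[lt_qp le_pqN].
  by rewrite /selfloop /= (leq_trans _ le_pqN) // leq_mul2r ltnW ?orbT.
have uniq_V : uniq V by rewrite /V nbhdE filter_uniq ?iota_uniq.
rewrite clustering_binomial linksE (eq_big_seq _ later_all) sum_count_ltn_uniq //.
have -> : 'C(size V, 2) + count (selfloop N) V = 'C((size V).+1, 2).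
  by rewrite loops_all binS bin1.
by rewrite divff // pnatr_eq0 -lt0n bin_gt0.
Qed.

Section SmallPrime.

Hypothesis small_p : p * p <= N.

Let le_p_Np : p <= N %/ p. Proof. by rewrite leq_divRL. Qed.
Let le_Np_N : N %/ p <= N. Proof. exact: leq_div. Qed.

Lemma size_nbhd : (size (nbhd N p)).+1 = primepi (N %/ p).
Proof.
rewrite -(count_primes_between_except (a := 0) pr_p _ le_Np_N) ?p_gt0 ?addn0 //.
rewrite nbhdE size_filter; congr _.+1; apply: eq_count => q /=.
by rewrite leq_divRL // mulnC; case: (boolP (prime q)) => //= /prime_gt0 ->.
Qed.

Lemma count_selfloop_nbhd : (count (selfloop N) (nbhd N p)).+1 = primepi (isqrt N).
Proof.
have le_p_sqrt : p <= isqrt N by rewrite leq_isqrt.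
rewrite -(count_primes_between_except (a := 0) pr_p _ (isqrt_leq N)) ?p_gt0 ?addn0 //.
rewrite nbhdE count_filter; congr _.+1; apply: eq_count => q /=.
rewrite leq_isqrt /selfloop andbC; case: (boolP (prime q)) => //= /prime_gt0 ->.
case: (q != p) => //=; apply/andP/idP => [[] //|le_qqN]; split=> //.
by case: (leqP q p) => ?; nia.
Qed.

Lemma later_nbrs_lt {q} :
  q < p -> (later_nbrs q).+1 + primepi q = primepi (N %/ p).
Proof.
move=> lt_qp; rewrite -(count_primes_between_except (a := q) pr_p _ le_Np_N) ?lt_qp //.
rewrite /later_nbrs nbhdE count_filter; congr (_.+1 + _); apply: eq_count => q' /=.
rewrite /adjacent leq_divRL //; case: (prime q') => /=; nia.
Qed.

Lemma later_nbrs_gt {q} :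
  p < q -> q * q <= N -> later_nbrs q + primepi q = primepi (N %/ q).
Proof.
move=> lt_pq le_qqN; have q_gt0 : 0 < q by apply: leq_trans lt_pq.
rewrite -(count_primes_between (a := q) _ (leq_div N q)); last by rewrite leq_divRL.
rewrite /later_nbrs nbhdE count_filter; congr (_ + _); apply: eq_count => q' /=.
rewrite /adjacent leq_divRL //; case: (prime q') => /=; nia.
Qed.

Lemma later_nbrs_gt_isqrt {q} : p < q -> N < q * q -> later_nbrs q = 0.
Proof.
move=> lt_pq lt_Nqq; apply/eqP; rewrite -leqn0 leqNgt -has_count; apply/hasP.
by case=> q' _ /andP[lt_qq' /andP[_]]; nia.
Qed.

Lemma sum_later_nbrs :
  (\sum_(q <- nbhd N p) (later_nbrs q)%:R =
   \sum_(1 <= j < primepi p) ((primepi (N %/ p))%:R - 1 - j%:R) +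
   \sum_((primepi p).+1 <= j < (primepi (isqrt N)).+1)
      ((primepi (N %/ nth_prime j))%:R - j%:R) :> rat)%R.
Proof.
set nbr := fun q => prime q && (q != p) && (p * q <= N).
have below_p : (\sum_(q <- iota 0 N.+1 | nbr q && (q < p)%N) (later_nbrs q)%:R =
    \sum_(1 <= j < primepi p) ((primepi (N %/ p))%:R - 1 - j%:R) :> rat)%R.
  have pi_p : (primepi p.-1).+1 = primepi p.
    by rewrite -{2}(prednK p_gt0) primepiS (prednK p_gt0) pr_p addn1.
  rewrite -pi_p -(big_primes_between (a := 0) _ (fun j => (primepi (N %/ p))%:R - 1 - j%:R)%R
    (leq_trans (leq_pred p) (leq_trans le_p_Np le_Np_N))).
  apply: eq_big => q; first by rewrite /nbr; case: (boolP (prime q)) => //= /prime_gt0; nia.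
  by move=> /andP[_ /later_nbrs_lt <-]; ring.
have above_p : (\sum_(q <- iota 0 N.+1 | nbr q && ~~ (q < p)%N) (later_nbrs q)%:R =
    \sum_((primepi p).+1 <= j < (primepi (isqrt N)).+1)
      ((primepi (N %/ nth_prime j))%:R - j%:R) :> rat)%R.
  transitivity (\sum_(q <- iota 0 N.+1 | prime q && (p < q <= isqrt N)%N)
                 (later_nbrs q)%:R : rat)%R.
    rewrite [LHS]big_mkcond [RHS]big_mkcond; apply: eq_bigr => q _; rewrite /nbr.
    case: (boolP (prime q)) => //= pr_q; case: (ltngtP q p) => lt_pq; rewrite ?andbF //=.
    rewrite andbT; case: (leqP q (isqrt N)) => [|lt_sqrt_q].
      by rewrite leq_isqrt => le_qqN; rewrite ifT //; nia.
    by case: ifP => // _; rewrite later_nbrs_gt_isqrt // ltnNge -leq_isqrt -ltnNge.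
  rewrite -(big_primes_between (a := p) _ (fun j => (primepi (N %/ nth_prime j))%:R - j%:R)%R
    (isqrt_leq N)).
  apply: eq_big => // q /and3P[pr_q lt_pq]; rewrite leq_isqrt => le_qqN.
  by rewrite nth_prime_primepi // -(later_nbrs_gt lt_pq le_qqN) natrD addrK.
by rewrite nbhdE big_filter (bigID (fun q => q < p)) below_p above_p.
Qed.

End SmallPrime.

End Clustering.

Theorem mainTheorem11 (N p : nat) :
  2 <= N -> prime p -> p <= N -> 0 < size (nbhd N p) ->
  (N <= p * p -> clustering N p = 1%R) /\
  (p * p <= N ->
   clustering N p =
   (let A : rat := (primepi p)%:R in
    let B : rat := (primepi (N %/ p))%:R in
    let S : nat := primepi (isqrt N) in
    ((A - 1) * (2 * (B - 1) - A)
     + 2 * ((\sum_((primepi p).+1 <= j < S.+1)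
               ((primepi (N %/ nth_prime j))%:R - j%:R))
            + S%:R - 1))
    / (B * (B - 1)))%R).
Proof.
move=> _ pr_p _ k_gt0; split=> [le_Np|small_p]; first exact: clustering_complete.
rewrite clustering_binomial linksE natrD natr_sum (sum_later_nbrs _ _ pr_p small_p) /=.
rewrite -(size_nbhd _ _ pr_p small_p) -(count_selfloop_nbhd _ _ pr_p small_p).
have [a pi_p] : exists a, primepi p = a.+1.
  by exists (primepi p).-1; rewrite prednK // (ltn_primepi (prime_gt0 pr_p) pr_p).
set k := size _; set c := count _ _; rewrite pi_p.
set Y := (\sum_(1%N <= j < a.+1) _)%R.
have hY : (2 * Y = a%:R * (2 * (k.+1%:R - 1) - a%:R - 1))%R.
  exact: double_sum_sub_index.
have two_binom : ('C(k.+1, 2)%:R = k.+1%:R * k%:R / 2 :> rat)%R.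
  by rewrite -natrM -mul2n_bin2S natrM mulrC mulKf.
have -> : Y = (2 * Y / 2)%R by field.
have k_neq0 : (k%:R != 0 :> rat)%R by rewrite pnatr_eq0 -lt0n.
have k1_neq0 : (k%:R + 1 != 0 :> rat)%R by rewrite natr1 pnatr_eq0.
rewrite hY two_binom -[k.+1]addn1 -[a.+1]addn1 -[c.+1]addn1 !natrD.
by field; rewrite addrK k_neq0 k1_neq0.
Qed.
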